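(* For each integer $m\ge-1$, the function $\hat r_{-m}(x',\xi)$ can be written as a finite sum of expressions of the form $|\xi|^{-k}p(x',\xi)$, each of total weight $m+1$, and for each summand the total parity, normal parity and $\xi$-parity are well defined and their sum is $0$ modulo $2$. The same holds for $r_{-m}(x,\xi)=-\hat r_{-m}(x,0,\xi)$.
   Context: Let $(\Omega,g)$ be a compact Riemannian manifold of dimension $n$ with smooth boundary $M$. In boundary normal coordinates $x'=(x,x^n)$, $x=(x^1,\dots,x^{n-1})$ ($x^n$ = parameter along inward normal geodesics from $M$), $g=\sum_{\alpha,\beta=1}^{n-1}g_{\alpha\beta}(x')dx^\alpha dx^\beta+(dx^n)^2$; Greek indices run over $1,\dots,n-1$, $\xi=(\xi^1,\dots,\xi^{n-1})$ are dual variables, $D_{x^j}=-i\partial_{x^j}$, $\delta=\det(g_{\alpha\beta})$. Set $E=-\frac12\sum g^{\alpha\beta}\partial_{x^n}g_{\alpha\beta}$, $q_2=\sum g^{\alpha\beta}\xi^\alpha\xi^\beta$, $q_1=-i\sum_{\alpha,\beta}(\frac12g^{\alpha\beta}\partial_{x^\alpha}\log\delta+\partial_{x^\alpha}g^{\alpha\beta})\xi^\beta$, and $|\xi|=\sqrt{q_2}$. Define $\hat r_1=-\sqrt{q_2}$, $\hat r_0=\frac{1}{2\sqrt{q_2}}\big(\sum_\alpha\partial_{\xi^\alpha}\sqrt{q_2}\,D_{x^\alpha}\sqrt{q_2}-q_1-\partial_{x^n}\sqrt{q_2}+E\sqrt{q_2}\big)$, and for $m\ge0$, $\hat r_{-m-1}=\frac{1}{2\sqrt{q_2}}\Big(\sum_{-m\le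 j\le1,\,-m\le k\le1,\,|K|=j+k+m}\frac1{K!}\partial_\xi^K\hat r_j\,D_x^K\hat r_k+\partial_{x^n}\hat r_{-m}-E\hat r_{-m}\Big)$, with $K\in\mathbb N^{n-1}$ multi-indices. (Then $\mathcal D$, the Dirichlet-to-Neumann operator, has full symbol $r_1+r_0+r_{-1}+\dots$ modulo smoothing.) An expression of the form $|\xi|^{-k}p(x',\xi)$ means $k\in\mathbb Z$ and $p$ a polynomial in $\xi$ whose coefficients are polynomials (with constant complex coefficients) in $g_{\alpha\beta}$, $g^{\alpha\beta}$ and their partial derivatives in $x'$. Its total (resp. normal) weight is $w$ if every monomial in $p$ contains exactly $w$ derivatives (resp. $w$ derivatives in $x^n$); its total (resp. normal) parity is $1$ if every monomial has odd total (resp. normal) weight and $0$ if every monomial has even one; its $\xi$-parity is $0$ if $p$ is even in $\xi$ and $1$ if odd. *)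

(* Formal (symbolic) model of the symbol calculus of
   Lemma 3.1: the r^_{-m} are computed as formal sums of monomial terms
   c * |xi|^{-k} * (product of factors), where the factors are
   partial derivatives d^K g_{ab}, d^K g^{ab} (K a multi-index in x'),
   and the dual variables xi^a. *)
From HB Require Import structures.
From mathcomp Require Import all_boot all_order all_algebra.
From mathcomp Require Import algC.
Set Implicit Arguments. Unset Strict Implicit. Unset Printing Implicit Defensive.
Import Order.TTheory GRing.Theory Num.Theory.
Local Open Scope ring_scope.

(* Conventions (n = dimension of Omega):
   - tangential (Greek) indices alpha = 1..n-1 are encoded as 0..n-2;
   - coordinates x' = (x^1,..,x^n) are encoded as 0..n-1; the normal
     coordinate x^n is the index n.-1;
   - a derivative multi-index K in N^n is a function nat -> nat
     (only the values at 0..n-1 matter). *)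
Definition mindex := nat -> nat.
Definition mzero : mindex := fun _ => 0%N.
Definition mincr (K : mindex) (j : nat) : mindex :=
  fun i => if i == j then (K i).+1 else K i.

Inductive factor :=
| Gd of nat & nat & mindex   (* d_{x'}^K g_{ab} *)
| Gi of nat & nat & mindex   (* d_{x'}^K g^{ab} *)
| Xi of nat.                 (* xi^a *)

(* Term c k fs  stands for  c * |xi|^{-k} * prod fs *)
Record term := Term { tcoef : algC; texp : int; tfac : seq factor }.
(* an expression is a finite (formal) sum of terms *)
Definition expr := seq term.

Definition tmul (t u : term) : term :=
  Term (tcoef t * tcoef u) (texp t + texp u) (tfac t ++ tfac u).
Definition emul (e f : expr) : expr := [seq tmul t u | t <- e, u <- f].
Definition escale (c : algC) (e : expr) : expr :=
  [seq Term (c * tcoef t) (texp t) (tfac t) | t <- e].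
(* multiplication by 1/(2 sqrt q2) = (1/2) |xi|^{-1} *)
Definition half_inv_abs (e : expr) : expr :=
  [seq Term (tcoef t / 2) (texp t + 1) (tfac t) | t <- e].

Definition tang (n : nat) : seq nat := iota 0 n.-1.
Definition nrm (n : nat) : nat := n.-1.

Definition q2 (n : nat) : expr :=
  flatten [seq [seq Term 1 0 [:: Gi a b mzero; Xi a; Xi b] | b <- tang n]
          | a <- tang n].
(* sqrt q2 = |xi| = |xi|^{-(-1)} *)
Definition absxi : expr := [:: Term 1 (-1) [::]].

(* Derivations.  [dfac f] is the derivative of a single factor,
   as a formal sum of (coefficient, product of factors). *)
Section Derivation.
Variable dfac : factor -> seq (algC * seq factor).

Fixpoint dfacs (fs : seq factor) : seq (algC * seq factor) :=
  match fs with
  | [::] => [::]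
  | f :: fs' => [seq (p.1, p.2 ++ fs') | p <- dfac f]
                ++ [seq (p.1, f :: p.2) | p <- dfacs fs']
  end.

(* derivative of the polynomial part only *)
Definition dpoly (e : expr) : expr :=
  flatten [seq [seq Term (tcoef t * p.1) (texp t) p.2 | p <- dfacs (tfac t)]
          | t <- e].

(* full derivative, using d(|xi|^{-k}) = (-k/2) |xi|^{-k-2} d(q2) *)
Definition dterm (dq2 : expr) (t : term) : expr :=
  [seq Term (tcoef t * p.1) (texp t) p.2 | p <- dfacs (tfac t)]
  ++ escale (- (texp t)%:~R / 2) (emul [:: Term (tcoef t) (texp t + 2) (tfac t)] dq2).

Definition dexpr (n : nat) (e : expr) : expr :=
  flatten [seq dterm (dpoly (q2 n)) t | t <- e].
End Derivation.

Definition dfac_x (j : nat) (f : factor) : seq (algC * seq factor) :=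
  match f with
  | Gd a b K => [:: (1, [:: Gd a b (mincr K j)])]
  | Gi a b K => [:: (1, [:: Gi a b (mincr K j)])]
  | Xi _ => [::]
  end.
Definition dfac_xi (c : nat) (f : factor) : seq (algC * seq factor) :=
  match f with
  | Xi a => if a == c then [:: (1, [::])] else [::]
  | _ => [::]
  end.

Definition dx (n j : nat) (e : expr) : expr := dexpr (dfac_x j) n e.
Definition dxi (n c : nat) (e : expr) : expr := dexpr (dfac_xi c) n e.
Definition Dx (n j : nat) (e : expr) : expr := escale (- 'i) (dx n j e).

(* multi-indices K in N^{n-1} (tangential), as sequences of length n-1 *)
Fixpoint mindices (len N : nat) : seq (seq nat) :=
  match len with
  | 0 => if N == 0%N then [:: [::]] else [::]
  | len'.+1 => flatten [seq [seq i :: K | K <- mindices len' (N - i)]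
                       | i <- iota 0 N.+1]
  end.
Definition Kfact (K : seq nat) : nat := \prod_(k <- K) k`!.
Definition DxK (n : nat) (K : seq nat) (e : expr) : expr :=
  foldl (fun e a => iter (nth 0%N K a) (Dx n a) e) e (tang n).
Definition dxiK (n : nat) (K : seq nat) (e : expr) : expr :=
  foldl (fun e a => iter (nth 0%N K a) (dxi n a) e) e (tang n).

Definition Eexp (n : nat) : expr :=
  flatten [seq [seq Term (- (1/2)) 0 [:: Gi a b mzero; Gd a b (mincr mzero (nrm n))]
               | b <- tang n] | a <- tang n].
(* q1 = -i sum_{a,b} (1/2 g^{ab} d_a log delta + d_a g^{ab}) xi^b,
   with d_a log delta = sum_{c,d} g^{cd} d_a g_{cd} (Jacobi's formula) *)
Definition q1 (n : nat) : expr :=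
  flatten [seq flatten [seq
     [seq Term (- 'i / 2) 0 [:: Gi a b mzero; Gi c d mzero; Gd c d (mincr mzero a); Xi b]
     | c <- tang n, d <- tang n]
     ++ [:: Term (- 'i) 0 [:: Gi a b (mincr mzero a); Xi b]]
   | b <- tang n] | a <- tang n].

(* r^_1 = - sqrt q2 *)
Definition rhat1 : expr := [:: Term (-1) (-1) [::]].
Definition rhat0 (n : nat) : expr :=
  half_inv_abs
   (flatten [seq emul (dxi n a absxi) (Dx n a absxi) | a <- tang n]
    ++ escale (-1) (q1 n)
    ++ escale (-1) (dx n (nrm n) absxi)
    ++ emul (Eexp n) absxi).

(* Given L = [:: r^_1; r^_0; ...; r^_{-m}] (m >= 0), compute r^_{-m-1}.
   r^_j is at position 1 - j in L. *)
Definition rnext (n : nat) (L : seq expr) : expr :=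
  let m := (size L).-2 in
  let last := nth [::] L m.+1 in
  half_inv_abs
   (flatten [seq flatten [seq
       (if (a + b <= m + 2)%N then
          flatten [seq escale ((Kfact K)%:R^-1)
                         (emul (dxiK n K (nth [::] L a)) (DxK n K (nth [::] L b)))
                  | K <- mindices n.-1 (m + 2 - a - b)]
        else [::])
     | b <- iota 0 (m + 2)] | a <- iota 0 (m + 2)]
    ++ dx n (nrm n) last
    ++ escale (-1) (emul (Eexp n) last)).

(* rhats n N = [:: r^_1; r^_0; ...; r^_{1-N}] *)
Fixpoint rhats (n N : nat) : seq expr :=
  match N with
  | 0 => [:: rhat1]
  | N'.+1 => if N' is 0 then [:: rhat1; rhat0 n]
             else let L := rhats n N' in rcons L (rnext n L)
  end.

Definition rhat (n : nat) (m : int) : expr :=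
  nth [::] (rhats n (absz (m + 1))) (absz (m + 1)).
(* r_{-m}(x,xi) = - r^_{-m}(x,0,xi): restricting the coefficient functions
   to x^n = 0 does not change the formal expression. *)
Definition rbd (n : nat) (m : int) : expr := escale (-1) (rhat n m).

Definition fweight (n : nat) (f : factor) : nat :=
  match f with
  | Gd _ _ K | Gi _ _ K => \sum_(i < n) K i
  | Xi _ => 0
  end.
Definition fnweight (n : nat) (f : factor) : nat :=
  match f with
  | Gd _ _ K | Gi _ _ K => K (nrm n)
  | Xi _ => 0
  end.
Definition fxideg (f : factor) : nat := if f is Xi _ then 1 else 0.

Definition tweight n (t : term) : nat := sumn [seq fweight n f | f <- tfac t].
Definition tnweight n (t : term) : nat := sumn [seq fnweight n f | f <- tfac t].
Definition txideg (t : term) : nat := sumn [seq fxideg f | f <- tfac t].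

Definition good_term (n w : nat) (t : term) : bool :=
  (tweight n t == w) && ~~ odd (tweight n t + tnweight n t + txideg t).

(* Every monomial c |xi|^-k prod(fs) carries a weight (the number of
   x'-derivatives in fs) and a parity (normal weight + xi-degree, mod 2).
   Both are additive under products.  A tangential derivative d_{x^alpha}
   raises the weight by one and keeps the parity, d_{x^n} raises the weight
   and flips the parity, and d_{xi} keeps the weight and flips the parity;
   this holds also on the factor |xi|^-k, whose derivative is a multiple of
   the derivative of q2, itself of weight 0 and parity 0.  The building
   blocks E and q1 have weight 1 and parity 1, so induction along the
   recursion shows that every monomial of r^_{-m} has weight m+1 and parity
   m+1; hence total parity + normal parity + xi-parity is even. *)
From HB Require Import structures.
From mathcomp Require Import all_boot all_order all_algebra.
From mathcomp Require Import algC zify.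
Set Implicit Arguments. Unset Strict Implicit. Unset Printing Implicit Defensive.
Import Order.TTheory GRing.Theory Num.Theory.
Local Open Scope ring_scope.

Lemma all_flatten (T : Type) (a : pred T) (ss : seq (seq T)) :
  all a (flatten ss) = all (all a) ss.
Proof. by elim: ss => //= s ss IH; rewrite all_cat IH. Qed.

Definition weight (n : nat) (fs : seq factor) : nat :=
  sumn [seq fweight n f | f <- fs].
Definition nweight (n : nat) (fs : seq factor) : nat :=
  sumn [seq fnweight n f | f <- fs].
Definition xideg (fs : seq factor) : nat := sumn [seq fxideg f | f <- fs].
Definition parity (n : nat) (fs : seq factor) : bool :=
  odd (nweight n fs + xideg fs).

Lemma weight_cat n fs gs : weight n (fs ++ gs) = (weight n fs + weight n gs)%N.
Proof. by rewrite /weight map_cat sumn_cat. Qed.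

Lemma parity_cat n fs gs : parity n (fs ++ gs) = parity n fs (+) parity n gs.
Proof.
by rewrite /parity /nweight /xideg !map_cat !sumn_cat addnACA oddD.
Qed.

Lemma sum_mincr n (K : mindex) j : (j < n)%N ->
  (\sum_(i < n) mincr K j i = (\sum_(i < n) K i).+1)%N.
Proof.
move=> jn; rewrite (bigD1 (Ordinal jn)) // [in RHS](bigD1 (Ordinal jn)) //=.
rewrite /mincr eqxx addSn; congr (_ + _).+1; apply: eq_bigr => i ij.
by case: eqP => // eij; move: ij; rewrite -val_eqE /= eij eqxx.
Qed.

Lemma sum_mzero n : (\sum_(i < n) mzero i = 0)%N.
Proof. exact: big1. Qed.

Lemma sum_mincr_mzero n j : (j < n)%N -> (\sum_(i < n) mincr mzero j i = 1)%N.
Proof. by move=> jn; rewrite sum_mincr // sum_mzero. Qed.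

Definition graded (n w : nat) (s : bool) (e : expr) : bool :=
  all (fun t => (weight n (tfac t) == w) && (parity n (tfac t) == s)) e.

Section GradedAlgebra.
Variable n : nat.

Lemma graded_cat w s e f :
  graded n w s e -> graded n w s f -> graded n w s (e ++ f).
Proof. by rewrite /graded all_cat => -> ->. Qed.

Lemma graded_flatten w s (es : seq expr) :
  all (graded n w s) es -> graded n w s (flatten es).
Proof. by rewrite /graded all_flatten. Qed.

Lemma graded_escale w s c e : graded n w s e -> graded n w s (escale c e).
Proof. by rewrite /graded all_map. Qed.

Lemma graded_half_inv_abs w s e :
  graded n w s e -> graded n w s (half_inv_abs e).
Proof. by rewrite /graded all_map. Qed.

Lemma graded_emul w1 s1 w2 s2 e f :
  graded n w1 s1 e -> graded n w2 s2 f ->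
  graded n (w1 + w2) (s1 (+) s2) (emul e f).
Proof.
rewrite /emul; elim: e => //= t e IH /andP[/andP[/eqP wt /eqP st] He] Hf.
apply: graded_cat; last exact: IH.
rewrite /graded all_map; apply: sub_all Hf => u /andP[/eqP wu /eqP su] /=.
by rewrite weight_cat parity_cat wt st wu su !eqxx.
Qed.

Lemma graded_iter (g : expr -> expr) dw (ds : bool) k w s e :
  (forall w s e, graded n w s e -> graded n (w + dw) (s (+) ds) (g e)) ->
  graded n w s e -> graded n (w + k * dw) (s (+) odd (k * ds)) (iter k g e).
Proof.
move=> Hg He; elim: k => [|k IH] /=; first by rewrite addn0 addbF.
by rewrite !mulSnr addnA oddD oddb addbA; apply: Hg.
Qed.

Lemma graded_foldl_iter (g : nat -> expr -> expr) dw (ds : bool) K l w s e :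
  (forall a, a \in l ->
     forall w s e, graded n w s e -> graded n (w + dw) (s (+) ds) (g a e)) ->
  graded n w s e ->
  graded n (w + sumn [seq nth 0%N K a | a <- l] * dw)
           (s (+) odd (sumn [seq nth 0%N K a | a <- l] * ds))
    (foldl (fun e a => iter (nth 0%N K a) (g a) e) e l).
Proof.
elim: l w s e => [|a l IH] w s e Hg He /=; first by rewrite addn0 addbF.
rewrite !mulnDl addnA oddD addbA; apply: IH.
  by move=> b bl; apply: Hg; rewrite inE bl orbT.
by apply: graded_iter He; apply: Hg; rewrite inE eqxx.
Qed.

End GradedAlgebra.

Lemma graded_q2 n : graded n 0 false (q2 n).
Proof.
apply: graded_flatten; rewrite all_map; apply/allP => a _ /=.
rewrite /graded all_map; apply/allP => b _ /=.
by rewrite /weight /parity /nweight /xideg /= sum_mzero.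
Qed.

Definition shifts (n dw : nat) (ds : bool) (fs : seq factor)
    (p : algC * seq factor) : bool :=
  (weight n p.2 == weight n fs + dw)%N && (parity n p.2 == parity n fs (+) ds).

Section Derivations.
Variables (n dw : nat) (ds : bool) (dfac : factor -> seq (algC * seq factor)).
Hypothesis dfac_shifts : forall f, all (shifts n dw ds [:: f]) (dfac f).

Lemma dfacs_shifts fs : all (shifts n dw ds fs) (dfacs dfac fs).
Proof.
elim: fs => //= f fs IH; rewrite all_cat !all_map; apply/andP; split.
  apply: sub_all (dfac_shifts f) => -[c p] /andP[/eqP wp /eqP sp] /=.
  rewrite /shifts /= -[f :: fs]/([:: f] ++ fs) !weight_cat !parity_cat wp sp.
  by rewrite addnAC eqxx addbAC eqxx.
apply: sub_all IH => -[c p] /andP[/eqP wp /eqP sp] /=.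
rewrite /shifts /= -[f :: p]/([:: f] ++ p) -[f :: fs]/([:: f] ++ fs).
by rewrite !weight_cat !parity_cat wp sp addnA eqxx addbA eqxx.
Qed.

Lemma graded_dfacs_term w s t c k :
  graded n w s [:: t] ->
  graded n (w + dw) (s (+) ds)
    [seq Term (c * p.1) k p.2 | p <- dfacs dfac (tfac t)].
Proof.
rewrite /graded /= andbT => /andP[/eqP wt /eqP st]; rewrite all_map.
apply: sub_all (dfacs_shifts (tfac t)) => -[c' p] /andP[/eqP wp /eqP sp] /=.
by rewrite wp sp wt st !eqxx.
Qed.

Lemma graded_dpoly w s e :
  graded n w s e -> graded n (w + dw) (s (+) ds) (dpoly dfac e).
Proof.
elim: e => // t e IH /= /andP[Ht He].
apply: graded_cat; last exact: IH.
by apply: graded_dfacs_term; rewrite /graded /= Ht.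
Qed.

Lemma graded_dexpr w s e :
  graded n w s e -> graded n (w + dw) (s (+) ds) (dexpr dfac n e).
Proof.
elim: e => // t e IH /= /andP[Ht He].
apply: graded_cat; last exact: IH.
apply: graded_cat; first by apply: graded_dfacs_term; rewrite /graded /= Ht.
apply: graded_escale; rewrite -[dw]add0n -[ds]addFb.
apply: graded_emul; first by rewrite /graded /= Ht.
exact: graded_dpoly (graded_q2 n).
Qed.

End Derivations.

Lemma dfac_x_shifts n j f : (j < n)%N ->
  all (shifts n 1 (j == nrm n) [:: f]) (dfac_x j f).
Proof.
move=> jn; case: f => [a b K|a b K|a] //=;
  by rewrite /shifts /weight /parity /nweight /xideg /= !addn0 sum_mincr //
     addn1 eqxx /mincr [nrm n == j]eq_sym;
  case: (j == nrm n); rewrite /= ?addbT ?addbF ?eqxx.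
Qed.

Lemma dfac_xi_shifts n c f : all (shifts n 0 true [:: f]) (dfac_xi c f).
Proof. by case: f => // a /=; case: (a == c). Qed.

Lemma graded_dx n j w s e : (j < n)%N -> graded n w s e ->
  graded n (w + 1) (s (+) (j == nrm n)) (dx n j e).
Proof. by move=> jn; apply: graded_dexpr => f; apply: dfac_x_shifts. Qed.

Lemma graded_Dx n j w s e : (j < n)%N -> graded n w s e ->
  graded n (w + 1) (s (+) (j == nrm n)) (Dx n j e).
Proof. by move=> jn He; apply/graded_escale/graded_dx. Qed.

Lemma graded_dxi n c w s e : graded n w s e -> graded n w (~~ s) (dxi n c e).
Proof.
by rewrite -addbT -[w in graded _ w _ (dxi _ _ _)]addn0;
   apply: graded_dexpr; apply: dfac_xi_shifts.
Qed.

Lemma mem_tang n a : a \in tang n -> (a < n)%N /\ (a == nrm n) = false.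
Proof. by rewrite mem_iota /nrm => an; split; lia. Qed.

Lemma graded_Dx_tang n a w s e : a \in tang n -> graded n w s e ->
  graded n (w + 1) s (Dx n a e).
Proof.
by case/mem_tang => an an' He; have := graded_Dx an He; rewrite an' addbF.
Qed.

Lemma mem_mindices len N K : K \in mindices len N -> size K = len /\ sumn K = N.
Proof.
elim: len N K => [|len IH] N K.
  by rewrite /=; case: eqP => // -> /[!inE] /eqP ->.
case/flatten_mapP => i; rewrite mem_iota ltnS => /andP[_ iN] /mapP[K' K'm ->] /=.
by have [-> ->] := IH _ _ K'm; rewrite subnKC.
Qed.

Lemma map_nth_tang n K : size K = n.-1 -> [seq nth 0%N K a | a <- tang n] = K.
Proof. by rewrite /tang => <-; exact: mkseq_nth. Qed.

Lemma graded_DxK n K N w s e : K \in mindices n.-1 N -> graded n w s e ->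
  graded n (w + N) s (DxK n K e).
Proof.
case/mem_mindices => sK <- He.
have := @graded_foldl_iter n (Dx n) 1 false K (tang n) w s e.
rewrite map_nth_tang //= muln1 muln0 /= addbF; apply=> // a aT w' s' e'.
by rewrite addbF; apply: graded_Dx_tang.
Qed.

Lemma graded_dxiK n K N w s e : K \in mindices n.-1 N -> graded n w s e ->
  graded n w (s (+) odd N) (dxiK n K e).
Proof.
case/mem_mindices => sK <- He.
have := @graded_foldl_iter n (dxi n) 0 true K (tang n) w s e.
rewrite map_nth_tang //= muln0 muln1 addn0; apply=> // a _ w' s' e'.
by rewrite addn0 addbT; apply: graded_dxi.
Qed.

Lemma graded_Eexp n : (1 <= n)%N -> graded n 1 true (Eexp n).
Proof.
move=> n1; apply: graded_flatten; rewrite all_map; apply/allP => a _ /=.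
rewrite /graded all_map; apply/allP => b _ /=.
have nrm_lt : (nrm n < n)%N by rewrite /nrm; lia.
by rewrite /weight /parity /nweight /xideg /= sum_mzero sum_mincr_mzero //
           /mincr eqxx.
Qed.

Lemma graded_q1 n : graded n 1 true (q1 n).
Proof.
apply: graded_flatten; rewrite all_map.
apply/allP => a /mem_tang[an an'] /=.
apply: graded_flatten; rewrite all_map; apply/allP => b _ /=.
rewrite eq_sym in an'; apply: graded_cat.
  apply/all_allpairsP => c d _ _.
  by rewrite /weight /parity /nweight /xideg /= !sum_mzero sum_mincr_mzero //
             /nrm /mincr an'.
by rewrite /graded /weight /parity /nweight /xideg /= sum_mincr_mzero //
           /nrm /mincr an'.
Qed.

Lemma graded_absxi n : graded n 0 false absxi.
Proof. by []. Qed.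

Lemma graded_rhat0 n : (1 <= n)%N -> graded n 1 true (rhat0 n).
Proof.
move=> n1; apply: graded_half_inv_abs.
have nrm_lt : (nrm n < n)%N by rewrite /nrm; lia.
apply: graded_cat; [|apply: graded_cat; [|apply: graded_cat]].
- apply: graded_flatten; rewrite all_map; apply/allP => a aT /=.
  exact: graded_emul (graded_dxi a (graded_absxi n))
                     (graded_Dx_tang aT (graded_absxi n)).
- exact/graded_escale/graded_q1.
- apply: graded_escale.
  by have := graded_dx nrm_lt (graded_absxi n); rewrite eqxx.
- exact: (graded_emul (graded_Eexp n1) (graded_absxi n)).
Qed.

Lemma graded_rnext n L : (1 <= n)%N -> (2 <= size L)%N ->
  (forall i, (i < size L)%N -> graded n i (odd i) (nth [::] L i)) ->
  graded n (size L) (odd (size L)) (rnext n L).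
Proof.
move=> n1 L2 HL; rewrite /rnext.
have -> : ((size L).-2 + 2 = size L)%N by lia.
have [l L_eq] : exists l, size L = l.+2 by exists (size L).-2; lia.
have last_lt : ((size L).-2.+1 < size L)%N by lia.
have nrm_lt : (nrm n < n)%N by rewrite /nrm; lia.
apply: graded_half_inv_abs; apply: graded_cat; [|apply: graded_cat].
- apply: graded_flatten; rewrite all_map.
  apply/allP => a /[!mem_iota] /andP[_ aL] /=.
  apply: graded_flatten; rewrite all_map.
  apply/allP => b /[!mem_iota] /andP[_ bL] /=.
  case: ifP => // abL.
  apply: graded_flatten; rewrite all_map.
  apply/allP => K Km /=; apply: graded_escale.
  have := graded_emul (graded_dxiK Km (HL a aL)) (graded_DxK Km (HL b bL)).
  have -> : (a + (b + (size L - a - b)) = size L)%N by lia.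
  by rewrite -!oddD; have -> : (a + (size L - a - b) + b = size L)%N by lia.
- have := graded_dx nrm_lt (HL _ last_lt).
  by rewrite L_eq eqxx addbT addn1 /= negbK.
- apply: graded_escale; have := graded_emul (graded_Eexp n1) (HL _ last_lt).
  by rewrite L_eq add1n /= negbK.
Qed.

Lemma rhatsSS n N : rhats n N.+2 = rcons (rhats n N.+1) (rnext n (rhats n N.+1)).
Proof. by []. Qed.

Lemma size_rhats n N : size (rhats n N) = N.+1.
Proof.
by elim: N => // -[|N] // IH; rewrite rhatsSS size_rcons IH.
Qed.

Lemma graded_rhats n N i : (1 <= n)%N -> (i <= N)%N ->
  graded n i (odd i) (nth [::] (rhats n N) i).
Proof.
move=> n1; elim: N i => [|[|N] IH] i iN.
- by case: i iN.
- by case: i iN => [|[|]] //= _; apply: graded_rhat0.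
rewrite rhatsSS nth_rcons size_rhats; case: ltnP => [iN'|Ni]; first exact: IH.
have -> : i = N.+2 by lia.
rewrite eqxx -[N.+2](size_rhats n N.+1).
apply: graded_rnext => //; first by rewrite size_rhats.
by move=> j; rewrite size_rhats ltnS; apply: IH.
Qed.

Lemma graded_good_term n w e : graded n w (odd w) e -> all (good_term n w) e.
Proof.
apply: sub_all => t /andP[/eqP wt /eqP st].
rewrite /good_term /tweight /tnweight /txideg.
by rewrite -/(weight n _) wt eqxx -addnA oddD -/(parity n _) st addbb.
Qed.

Theorem lemma3p1 (n : nat) (m : int) :
  (1 <= n)%N -> -1 <= m ->
  all (good_term n (absz (m + 1))) (rhat n m) /\
  all (good_term n (absz (m + 1))) (rbd n m).
Proof.
move=> n1 _; have rhat_graded := graded_rhats n1 (leqnn (absz (m + 1))).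
split; apply: graded_good_term; first exact: rhat_graded.
exact: graded_escale.
Qed.
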